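(* Let $B$ be a compact manifold with nonempty boundary $\partial B$, $c:\partial B\times[0,1)\hookrightarrow B$ an open collar of $\partial B$, and $\mathcal U=\{U_\alpha\}_{\alpha\in I}$ a finite open cover of $B$. Then there is $\epsilon\in(0,1]$ such that the subcollar $c|:\partial B\times[0,\epsilon)\hookrightarrow B$ is small with respect to $\mathcal U$.
   Context: A collar $c:\partial B\times[0,\epsilon)\hookrightarrow B$ is small with respect to $\mathcal U$ if (1) $U_\alpha\cap\big(B\setminus c(\partial B\times[0,\epsilon))\big)\ne\emptyset$ for every $\alpha\in I$, and (2) letting $I_\partial\subset I$ be the set of $\alpha$ with $U_\alpha\cap\partial B\neq\emptyset$, there exist open sets $W_\alpha\subset\partial B$, $\alpha\in I_\partial$, with $c(W_\alpha\times[0,\epsilon))\subset U_\alpha$ and $\{W_\alpha\}_{\alpha\in I_\partial}$ an open cover of $\partial B$. *)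

From HB Require Import structures.
From mathcomp Require Import all_boot all_order all_algebra.
From mathcomp Require Import all_classical all_reals all_analysis.
Set Implicit Arguments. Unset Strict Implicit. Unset Printing Implicit Defensive.
Import Order.TTheory GRing.Theory Num.Theory.
Import numFieldNormedType.Exports.
Local Open Scope classical_set_scope.
Local Open Scope ring_scope.

(* Closed half-space H^n = { v in R^n | v_0 >= 0 } (all of R^0 if n = 0). *)
Definition halfspace (R : realType) (n : nat) : set 'rV[R]_n :=
  [set v | forall i : 'I_n, nat_of_ord i = 0%N -> 0 <= v ord0 i].

Definition homeo_onto (X Y : topologicalType) (V : set X) (W : set Y)
    (f : X -> Y) : Prop :=
  exists g : Y -> X,
    [/\ {within V, continuous f}, {within W, continuous g}, f @` V = W,
        (forall x, V x -> g (f x) = x) & (forall y, W y -> f (g y) = y)].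

Definition mfd_interior_point (R : realType) (n : nat) (B : topologicalType)
    (x : B) : Prop :=
  exists (V : set B) (phi : B -> 'rV[R]_n) (O : set 'rV[R]_n),
    [/\ open V, V x, open O & homeo_onto V O phi].

Definition manifold_with_boundary (R : realType) (n : nat) (B : topologicalType)
    : Prop :=
  hausdorff_space B /\
  forall x : B, exists (V : set B) (phi : B -> 'rV[R]_n) (O : set 'rV[R]_n),
    [/\ open V, V x, open O & homeo_onto V (O `&` @halfspace R n) phi].

Definition mfd_boundary (R : realType) (n : nat) (B : topologicalType) : set B :=
  [set x | ~ mfd_interior_point R n x].

Definition collar_dom (R : realType) (B : topologicalType) (bd : set B) (e : R)
    : set (B * R)%type := [set p | bd p.1 /\ 0 <= p.2 < e].

Definition uncurry_collar (R : realType) (B : topologicalType) (c : B -> R -> B)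
    : B * R -> B := fun p => c p.1 p.2.

Definition open_collar (R : realType) (B : topologicalType) (bd : set B)
    (c : B -> R -> B) : Prop :=
  [/\ open (uncurry_collar c @` collar_dom bd 1),
      homeo_onto (collar_dom bd 1) (uncurry_collar c @` collar_dom bd 1)
        (uncurry_collar c)
    & forall x, bd x -> c x 0 = x].

Definition small_collar (R : realType) (B : topologicalType) (bd : set B)
    (c : B -> R -> B) (e : R) (I : Type) (U : I -> set B) : Prop :=
  (forall a : I, U a `&` ~` (uncurry_collar c @` collar_dom bd e) !=set0) /\
  exists W : I -> set B,
    (forall a : I, bd `&` U a !=set0 ->
        (exists O : set B, open O /\ W a = O `&` bd) /\
        (forall x t, W a x -> 0 <= t < e -> U a (c x t))) /\
    (bd `<=` \bigcup_(a in [set a | bd `&` U a !=set0]) W a).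

Arguments mfd_boundary R n B : clear implicits.
Arguments manifold_with_boundary R n B : clear implicits.

From HB Require Import structures.
From mathcomp Require Import all_boot all_order all_algebra.
From mathcomp Require Import all_classical all_reals all_analysis.
Set Implicit Arguments. Unset Strict Implicit. Unset Printing Implicit Defensive.
Import Order.TTheory GRing.Theory Num.Theory.
Import numFieldNormedType.Exports.
Local Open Scope classical_set_scope.
Local Open Scope ring_scope.

(* An open nonempty U_a contains an interior point of B: push a point of U_a
   along the first coordinate of a half-space chart.  An interior point is
   c(b, t) with t > 0 or lies off the whole collar, so it avoids every collar
   of width below t; this gives condition (1) for all small e.  For (2),
   continuity of c at (x, 0) provides, for each boundary point x of U_a, an
   open N around x and a width r with c((N ∩ ∂B) × [0, r)) ⊆ U_a; compactness
   of ∂B makes a single width work for all x, and W_a is the union of these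
   N, intersected with ∂B. *)

Lemma within_continuous_near (X Y : topologicalType) (A : set X) (f : X -> Y)
    (x : X) (W : set Y) :
  {within A, continuous f} -> A x -> open W -> W (f x) ->
  \forall y \near x, A y -> W (f y).
Proof.
move=> /subspace_continuousP cf Ax oW Wfx.
exact: cf x Ax W (open_nbhs_nbhs (conj oW Wfx)).
Qed.

Lemma homeo_onto_inj (X Y : topologicalType) (V : set X) (W : set Y)
    (f : X -> Y) (x y : X) :
  homeo_onto V W f -> V x -> V y -> f x = f y -> x = y.
Proof.
by case=> g [_ _ _ gK _] Vx Vy fxy; rewrite -(gK x Vx) -(gK y Vy) fxy.
Qed.

Lemma homeo_onto_restrict (X Y : topologicalType) (V : set X) (W W' : set Y)
    (f : X -> Y) :
  homeo_onto V W f -> W' `<=` W -> homeo_onto (V `&` f @^-1` W') W' f.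
Proof.
case=> g [cf cg fV gK fK] sW'W; exists g; split.
- by apply: continuous_subspaceW cf => z [].
- exact: continuous_subspaceW cg.
- apply/seteqP; split=> [_ [x [_ W'fx] <-] //|y W'y].
  have : W y by exact: sW'W.
  rewrite -fV => -[x Vx fxy].
  by exists x => //; split; rewrite /preimage //= fxy.
- by move=> x [Vx _]; exact: gK.
- by move=> y /sW'W; exact: fK.
Qed.

Section ManifoldInterior.
Variables (R : realType) (n : nat) (B : topologicalType).

Lemma open_mfd_interior : open [set x : B | mfd_interior_point R n x].
Proof.
rewrite openE => x [V [phi [D [oV Vx oD hphi]]]].
apply: (@filterS _ _ _ V); last exact: open_nbhs_nbhs.
by move=> y Vy; exists V, phi, D.
Qed.

Lemma closed_mfd_boundary : closed (mfd_boundary R n B).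
Proof. exact/open_closedC/open_mfd_interior. Qed.

Lemma mfd_interior_point_chart (V : set B) (phi : B -> 'rV[R]_n)
    (W D : set 'rV[R]_n) (x : B) :
  open V -> homeo_onto V W phi -> open D -> D `<=` W -> V x -> D (phi x) ->
  mfd_interior_point R n x.
Proof.
move=> oV hphi oD sDW Vx Dphix; exists (V `&` phi @^-1` D), phi, D; split=> //.
- case: hphi => g [cphi _ _ _ _].
  by apply: (continuous_inP _ oV).1 => //; rewrite -continuous_open_subspace.
- exact: homeo_onto_restrict hphi sDW.
Qed.

End ManifoldInterior.

Lemma halfspace0 (R : realType) : @halfspace R 0 = setT.
Proof. by apply/seteqP; split=> // v _ []. Qed.

Lemma open_coord0_gt0 (R : realType) (n : nat) :
  open [set z : 'rV[R]_n.+1 | 0 < z ord0 ord0].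
Proof.
exact: (continuousP _).1 (@coord_continuous R 1 n.+1 ord0 ord0) _ (@open_gt R 0).
Qed.

Lemma coord0_gt0_halfspace (R : realType) (n : nat) (z : 'rV[R]_n.+1) :
  0 < z ord0 ord0 -> halfspace z.
Proof. by move=> z0 i /(@ord_inj n.+1 i ord0) ->; exact: ltW. Qed.

Lemma halfspace_sub_closure (R : realType) (n : nat) :
  @halfspace R n.+1 `<=` closure [set z : 'rV[R]_n.+1 | 0 < z ord0 ord0].
Proof.
move=> v Hv N Nv; set w := fun s : R => v + s *: delta_mx ord0 ord0.
have w0 : w 0 = v by rewrite /w scale0r addr0.
have wE s : w s ord0 ord0 = v ord0 ord0 + s by rewrite /w !mxE eqxx mulr1.
have cw : {for 0, continuous w}.
  apply: continuousD; first exact: cst_continuous.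
  exact/continuousZr_tmp/cvg_id.
have {}cw : w @ (0 : R) --> v by rewrite -w0; exact: cw.
have Nw : \forall s \near 0^'+, N (w s).
  by apply: cvg_within; exact: cw N Nv.
have : \forall s \near 0^'+, 0 < s /\ N (w s).
  by apply: filterS2 (nbhs_right_gt 0) Nw.
move=> /filter_ex [s [s0 Nws]]; exists (w s); split=> //=.
by rewrite wE ltr_wpDl // (Hv ord0).
Qed.

Lemma open_meets_mfd_interior (R : realType) (n : nat) (B : topologicalType)
    (U : set B) :
  manifold_with_boundary R n B -> open U -> U !=set0 ->
  exists2 y, U y & mfd_interior_point R n y.
Proof.
move=> [_ charts] oU [x Ux].
have {charts} [V [phi [D [oV Vx oD hphi]]]] := charts x.
have [g [_ cg img gK fK]] := hphi.
have Dphix : (D `&` @halfspace R n) (phi x) by rewrite -img; exists x.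
case: n => [|n] in phi D oD hphi g cg img gK fK Dphix *.
  exists x => //; apply: (mfd_interior_point_chart oV hphi oD) => //.
  - by rewrite halfspace0 setIT.
  - by case: Dphix.
set H := @halfspace R n.+1.
have near_phix : \forall z \near phi x, D z /\ ((D `&` H) z -> (U `&` V) (g z)).
  apply: filterS2 (open_nbhs_nbhs (conj oD Dphix.1))
    (within_continuous_near cg Dphix (openI oU oV) _) => [z Dz UVgz //|].
  by rewrite gK.
have [z [z0 [Dz UVgz]]] := halfspace_sub_closure Dphix.2 near_phix.
have Hz : H z by exact: coord0_gt0_halfspace.
have [Ugz Vgz] := UVgz (conj Dz Hz).
exists (g z) => //.
apply: (mfd_interior_point_chart (D := D `&` [set z | 0 < z ord0 ord0]))
  oV hphi _ _ _ _.
- exact/openI/open_coord0_gt0.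
- by move=> w [Dw w0]; split=> //; exact: coord0_gt0_halfspace.
- exact: Vgz.
- by rewrite fK.
Qed.

Section Collar.
Variables (R : realType) (B : topologicalType) (bd : set B) (c : B -> R -> B).

Lemma collar_domS (e e' : R) : e <= e' -> collar_dom bd e `<=` collar_dom bd e'.
Proof.
move=> ee' [x t] [/= bx /andP[t0 te]].
by split; rewrite //= t0 (lt_le_trans te).
Qed.

Lemma collar_image_avoid (y : B) : open_collar bd c -> ~ bd y ->
  \forall e \near 0^'+, ~ (uncurry_collar c @` collar_dom bd e) y.
Proof.
move=> [_ hc c0] nby.
have [[[b t] dbt cbt]|ny] := pselect ((uncurry_collar c @` collar_dom bd 1) y);
  last first.
  near=> e => -[p dp cp]; apply: ny; exists p => //.
  by apply: collar_domS dp; near: e; exact/nbhs_right_le/ltr01.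
have t0 : 0 < t.
  case: dbt => [/= bb /andP[t0 _]]; rewrite lt0r t0 andbT.
  by apply/eqP => t0'; apply: nby; rewrite -cbt /uncurry_collar /= t0' c0.
near=> e => -[[b' t'] dbt' cbt'].
have et : e <= t by near: e; exact: nbhs_right_le.
have dbt'1 : collar_dom bd 1 (b', t').
  apply: collar_domS dbt'; apply: le_trans et _.
  by case: dbt => _ /andP[_ /ltW].
have [_ tt'] := homeo_onto_inj hc dbt dbt'1 (etrans cbt (esym cbt')).
by case: dbt' => _ /andP[_]; rewrite /= -tt' ltNge et.
Unshelve. all: end_near.
Qed.

Definition collar_core (e : R) (A : set B) : set B :=
  [set x | exists N : set B,
    [/\ open N, N x & forall y t, N y -> bd y -> 0 <= t < e -> A (c y t)]].

Lemma open_collar_core (e : R) (A : set B) : open (collar_core e A).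
Proof.
rewrite openE => x [N [oN Nx NA]].
apply: (@filterS _ _ _ N); last exact: open_nbhs_nbhs.
by move=> y Ny; exists N.
Qed.

Lemma collar_core_near (A : set B) (x : B) :
  {within collar_dom bd 1, continuous uncurry_collar c} -> c x 0 = x ->
  bd x -> open A -> A x ->
  \forall x' \near x & e \near 0^'+, collar_core e A x'.
Proof.
move=> cc cx0 bx oA Ax.
have dx0 : collar_dom bd (1 : R) (x, 0) by split; rewrite //= lexx ltr01.
have := within_continuous_near cc dx0 oA; rewrite /uncurry_collar /= cx0.
move=> /(_ Ax) [[N T] [/= nN nT] NTA].
move: nN; rewrite nbhsE => -[M [oM Mx] MN].
move/nbhs_ballP: nT => -[r r0 rT].
exists (M, [set d : R | d <= r /\ d <= 1]).
  split; first exact: open_nbhs_nbhs.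
  near=> d; split; near: d; apply: nbhs_right_le => //; exact: ltr01.
move=> [x' e] [/= Mx' [er e1]]; exists M; split=> // y t My bdy /andP[t0 te].
apply: (NTA (y, t)).
- split; first exact: MN.
  by apply: rT; rewrite /ball /= sub0r normrN ger0_norm // (lt_le_trans te er).
- by split; rewrite //= t0 (lt_le_trans te e1).
Unshelve. all: end_near.
Qed.

Lemma collar_core_cover (I : Type) (U : I -> set B) :
  compact bd -> {within collar_dom bd 1, continuous uncurry_collar c} ->
  (forall x, bd x -> c x 0 = x) -> (forall a, open (U a)) ->
  bd `<=` \bigcup_a U a ->
  \forall e \near 0^'+, bd `<=` \bigcup_a collar_core e (U a).
Proof.
move=> bdc cc c0 oU bdU.
apply: (compact_near_coveringP bd).1 bdc _ _
  (fun e x => (\bigcup_a collar_core e (U a)) x) _ _ => x bx.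
have [a _ Uax] := bdU x bx.
apply: filterS (collar_core_near cc (c0 x bx) bx (oU a) Uax) => -[x' e] core.
by exists a.
Qed.

Lemma small_collar_of_cover (I : Type) (U : I -> set B) (e : R) :
  (forall x, bd x -> c x 0 = x) -> 0 < e ->
  (forall a, U a `&` ~` (uncurry_collar c @` collar_dom bd e) !=set0) ->
  bd `<=` \bigcup_a collar_core e (U a) ->
  small_collar bd c e U.
Proof.
move=> c0 e0 avoid cover; split=> //.
exists (fun a => collar_core e (U a) `&` bd); split.
  move=> a _; split.
    by exists (collar_core e (U a)); split=> //; exact: open_collar_core.
  by move=> x t [[N [_ Nx NU]] bx]; exact: NU.
move=> x bx; have [a _ [N NxU]] := cover x bx.
exists a; last by split=> //; exists N.
case: NxU => _ Nx NU; exists x; split=> //.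
by rewrite -{1}(c0 x bx); apply: NU; rewrite ?lexx.
Qed.

End Collar.

Theorem mainTheorem10 (R : realType) (n : nat) (B : topologicalType)
    (c : B -> R -> B) (I : finType) (U : I -> set B) :
  manifold_with_boundary R n B ->
  compact [set: B] ->
  mfd_boundary R n B !=set0 ->
  open_collar (mfd_boundary R n B) c ->
  (forall a, open (U a)) ->
  (forall a, U a !=set0) ->
  [set: B] `<=` \bigcup_(a in [set: I]) U a ->
  exists e : R, 0 < e <= 1 /\ small_collar (mfd_boundary R n B) c e U.
Proof.
move=> hM Bc _ hcol oU U0 Ucov; set bd := mfd_boundary R n B.
have [_ [_ [cc _ _ _ _]] c0] := hcol.
have bdc : compact bd.
  apply: subclosed_compact Bc _; first exact: closed_mfd_boundary.
  exact: subsetT.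
have avoid a : \forall e \near 0^'+,
    U a `&` ~` (uncurry_collar c @` collar_dom bd e) !=set0.
  have [y Uy iy] := open_meets_mfd_interior hM (oU a) (U0 a).
  apply: filterS (collar_image_avoid hcol (fun bdy => bdy iy)) => e ?.
  by exists y.
have cover := collar_core_cover bdc cc c0 oU (subset_trans (subsetT bd) Ucov).
have : \forall e \near 0^'+, [/\ 0 < e, e <= 1,
    forall a, U a `&` ~` (uncurry_collar c @` collar_dom bd e) !=set0
  & bd `<=` \bigcup_a collar_core bd c e (U a)].
  near=> e; split; near: e.
  - exact: nbhs_right_gt.
  - exact/nbhs_right_le/ltr01.
  - exact: filter_forall.
  - exact: cover.
move=> /filter_ex [e [e0 e1 avoid_e cover_e]].
exists e; split; first by rewrite e0 e1.
exact: small_collar_of_cover.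
Unshelve. all: end_near.
Qed.
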